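(* Define $d_0=-1$ and, for $k\ge1$, $d_k=M(k,1,\mathbf{F}_q^* )-M(k,0,\mathbf{F}_q^* )$. Then $d_1=1$, and for $2\le k\le q-1$: $d_k=-k\,d_{k-1}$ if $p\nmid k$, and $d_k=(q-k)\,d_{k-1}$ if $p\mid k$, where $p$ is the characteristic of $\mathbf{F}_q$.
   Context: $M(k,b,D)$ denotes the number of ordered $k$-tuples $(x_1,\dots,x_k)$ of pairwise distinct elements of $D\subseteq\mathbf{F}_q$ with $x_1+\dots+x_k=b$. *)

From HB Require Import structures.
From mathcomp Require Import all_boot all_order all_algebra all_field.
Set Implicit Arguments. Unset Strict Implicit. Unset Printing Implicit Defensive.
Import GRing.Theory Num.Theory.
Local Open Scope ring_scope.

Definition M (F : finFieldType) (k : nat) (b : F) (D : {set F}) : nat :=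
  #|[set t : k.-tuple F | [&& uniq t, all (fun x => x \in D) t &
                              \sum_(x <- t) x == b]]|.

Definition Fstar (F : finFieldType) : {set F} := [set x : F | x != 0].

Definition d (F : finFieldType) (k : nat) : int :=
  if k is 0 then -1 else (M k 1 (Fstar F))%:Z - (M k 0 (Fstar F))%:Z.

From HB Require Import structures.
From mathcomp Require Import all_boot all_order all_algebra all_field.
From mathcomp Require Import ring.
Import GRing.Theory Num.Theory.
Local Open Scope ring_scope.

(* Let P_k(b) be the set of k-tuples of pairwise distinct elements of F
   summing to b, and N_k(b) its subset of tuples avoiding 0, so that
   M(k,b,F^* ) = |N_k(b)|.  Three counting facts drive the recursion:
   - splitting P_k(b) according to the position of 0 (which occurs at most
     once) gives |P_k(b)| = |N_k(b)| + k |N_{k-1}(b)|;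
   - if k != 0 in F, translating every entry by c moves the sum by k c, so
     |P_k(b)| does not depend on b;
   - if k = 0 in F, a tuple (x, y_2, ..., y_k) of P_k(b) is determined by
     its head x and the translate (y_2 - x, ..., y_k - x) in N_{k-1}(b),
     so |P_k(b)| = q |N_{k-1}(b)|.
   Since d_k = |N_k(1)| - |N_k(0)| for every k (including d_0 = -1), the
   first fact gives d_k = (|P_k(1)| - |P_k(0)|) - k d_{k-1} for k >= 1, and
   the last two evaluate the bracket as 0 when p does not divide k and as
   q d_{k-1} when it does. *)

Lemma card_le_in_inj (T U : finType) (A : {set T}) (B : {set U}) (f : T -> U) :
  {in A &, injective f} -> (forall x, x \in A -> f x \in B) -> (#|A| <= #|B|)%N.
Proof.
move=> injf fAB; rewrite -(card_in_imset injf); apply: subset_leq_card.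
by apply/subsetP => _ /imsetP [x xA ->]; apply: fAB.
Qed.

Lemma card_setI_sum (T : finType) (A : {set T}) (P : pred T) :
  #|A :&: [set t | P t]| = (\sum_(t in A) P t)%N.
Proof.
rewrite -sum1_card [LHS]big_mkcond [RHS]big_mkcond /=.
by apply: eq_bigr => t _; rewrite !inE; case: (t \in A); case: (P t).
Qed.

Lemma sum_tnth_eq (T : eqType) m (t : m.-tuple T) (x : T) :
  (\sum_(i < m) (tnth t i == x))%N = count_mem x t.
Proof.
rewrite -(big_tuple 0%N addn t xpredT (fun y => nat_of_bool (y == x))).
by elim: (val t) => [|y s IH]; rewrite ?big_nil // big_cons IH.
Qed.

Lemma nth0_rot {T : Type} (x0 : T) {s : seq T} {i : nat} :
  (i < size s)%N -> nth x0 (rot i s) 0 = nth x0 s i.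
Proof.
by move=> lt_i_s; rewrite /rot nth_cat size_drop subn_gt0 lt_i_s nth_drop addn0.
Qed.

Section DistinctSums.
Variable F : finFieldType.

Definition dist_tuples n (b : F) : {set n.-tuple F} :=
  [set t : n.-tuple F | uniq t && (\sum_(x <- t) x == b)].

Definition dist_tuples_nz n (b : F) : {set n.-tuple F} :=
  [set t : n.-tuple F | [&& uniq t, all (fun x => x \in Fstar F) t &
                              \sum_(x <- t) x == b]].

Lemma M_Fstar n (b : F) : M n b (Fstar F) = #|dist_tuples_nz n b|.
Proof. by []. Qed.

Lemma sum_map_addr (c : F) (s : seq F) :
  \sum_(x <- map (fun x => x + c) s) x = \sum_(x <- s) x + c *+ size s.
Proof.
elim: s => [|y s IH]; first by rewrite !big_nil addr0.
by rewrite /= !big_cons IH mulrS addrACA [c + _]addrC.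
Qed.

(* Translation by c maps P_n(b1) injectively into P_n(b1 + n c). *)
Lemma card_dist_tuples_shift n (b1 b2 c : F) : b1 + n%:R * c = b2 ->
  (#|dist_tuples n b1| <= #|dist_tuples n b2|)%N.
Proof.
move=> def_b2; apply: (@card_le_in_inj _ _ _ _ (map_tuple (fun x => x + c))).
  by move=> t1 t2 _ _ /(congr1 val) /(inj_map (addIr c)) /val_inj.
move=> t; rewrite !inE => /andP [uniq_t /eqP sum_t].
rewrite map_inj_uniq ?uniq_t; last exact: addIr.
by rewrite /= sum_map_addr size_tuple sum_t -mulr_natl def_b2.
Qed.

Lemma card_dist_tuples_const n (b1 b2 : F) : (n%:R : F) != 0 ->
  #|dist_tuples n b1| = #|dist_tuples n b2|.
Proof.
move=> n_neq0; apply/eqP; rewrite eqn_leq.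
by apply/andP; split; [apply: (card_dist_tuples_shift _ _ _ ((b2 - b1) / n%:R))
  | apply: (card_dist_tuples_shift _ _ _ ((b1 - b2) / n%:R))];
  rewrite mulrC divfK // addrC subrK.
Qed.

(* If n.+1 = 0 in F, then |P_{n+1}(b)| = q |N_n(b)|: a tuple x :: s of
   P_{n+1}(b) corresponds to the pair (x, s - x), and s - x avoids 0 and
   has sum b - (n+1) x = b. *)
Lemma card_dist_tuples_char n (b : F) : (n.+1%:R : F) = 0 ->
  #|dist_tuples n.+1 b| = (#|F| * #|dist_tuples_nz n b|)%N.
Proof.
move=> char_n1.
have mulrn_char (c : F) : c *+ n.+1 = 0 by rewrite -mulr_natl char_n1 mul0r.
rewrite -cardsT -cardsX; apply/eqP; rewrite eqn_leq; apply/andP; split.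
  apply: (@card_le_in_inj _ _ _ _ (fun t : n.+1.-tuple F =>
    (thead t, map_tuple (fun y => y + - thead t) (behead_tuple t)))).
    move=> t1 t2; case/tupleP: t1 => x s1; case/tupleP: t2 => x2 s2 _ _ [].
    by rewrite !theadE => <- /(inj_map (addIr (- x))) /val_inj ->.
  case/tupleP=> x s; rewrite !inE /= big_cons theadE.
  move=> /andP [/andP [x_notin_s uniq_s] /eqP sum_xs].
  apply/and3P; split.
  - by rewrite map_inj_uniq //; apply: addIr.
  - apply/allP => _ /mapP [y ys ->]; rewrite inE subr_eq0.
    by apply: contraNneq x_notin_s => <-.
  - rewrite sum_map_addr size_tuple mulNrn.
    have -> : - (x *+ n) = x by apply/esym/eqP; rewrite -addr_eq0 -mulrS mulrn_char.
    by rewrite addrC sum_xs.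
apply: (@card_le_in_inj _ _ _ _
  (fun cs : F * n.-tuple F => [tuple of cs.1 :: map (fun y => y + cs.1) cs.2])).
  move=> [c s1] [c2 s2] _ _ /(congr1 val) /= [<-].
  by move/(inj_map (addIr c))/val_inj ->.
move=> [c s]; rewrite !inE /= => /and3P [uniq_s nz_s /eqP sum_s].
rewrite big_cons sum_map_addr size_tuple sum_s addrCA -mulrS mulrn_char addr0.
rewrite eqxx andbT map_inj_uniq ?uniq_s ?andbT; last exact: addIr.
apply/mapP => -[y ys /esym/eqP]; rewrite -subr_eq0 addrK => /eqP y0.
by move/allP: nz_s => /(_ _ ys); rewrite y0 inE eqxx.
Qed.

(* Tuples of P_{n+1}(b) with 0 in position i are in bijection with N_n(b),
   via rotation bringing position i to the front and dropping the 0. *)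
Lemma card_dist_tuples_zero_at n (b : F) (i : 'I_n.+1) :
  #|dist_tuples n.+1 b :&: [set t | tnth t i == 0]| = #|dist_tuples_nz n b|.
Proof.
have rot_zero (t : n.+1.-tuple F) :
    tnth t i = 0 -> rot i t = 0 :: behead (rot i t).
  move=> ti0; case def_r: (rot i t) => [|x r] /=.
    by move/(congr1 size): def_r; rewrite size_rot size_tuple.
  have lt_i_t : (i < size t)%N by rewrite size_tuple.
  by have := nth0_rot 0 lt_i_t; rewrite def_r -tnth_nth ti0 /= => ->.
apply/eqP; rewrite eqn_leq; apply/andP; split.
  apply: (@card_le_in_inj _ _ _ _ (fun t => behead_tuple (rot_tuple i t))).
    move=> t1 t2; rewrite !inE => /andP [_ /eqP t1i0] /andP [_ /eqP t2i0].
    move=> /(congr1 val) /= eq_behead; apply/val_inj/(@rot_inj i).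
    by rewrite rot_zero // [RHS]rot_zero // eq_behead.
  move=> t; rewrite !inE => /andP [/andP [uniq_t /eqP sum_t] /eqP ti0].
  have sum_r : \sum_(x <- rot i t) x = b by rewrite -sum_t; apply: perm_big; rewrite perm_rot.
  have uniq_rt : uniq (rot i t) by rewrite rot_uniq.
  move: sum_r uniq_rt; rewrite rot_zero // big_cons add0r /=.
  move=> -> /andP [zero_notin uniq_r].
  rewrite uniq_r eqxx andbT; apply/allP => y y_r; rewrite inE.
  by apply: contraNneq zero_notin => <-.
apply: (@card_le_in_inj _ _ _ _ (fun s => rotr_tuple i (cons_tuple 0 s))).
  by move=> s1 s2 _ _ /(congr1 val) /rotr_inj [] /val_inj.
move=> s; rewrite !inE => /and3P [uniq_s nz_s /eqP sum_s].
have zero_notin : 0 \notin s by apply/negP => /(allP nz_s); rewrite inE eqxx.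
rewrite /= rotr_uniq /= zero_notin uniq_s.
have -> : \sum_(x <- rotr i (0 :: s)) x = \sum_(x <- 0 :: s) x.
  by apply: perm_big; rewrite perm_rotr.
rewrite big_cons add0r sum_s eqxx /=.
by rewrite (tnth_nth 0) /= -nth0_rot ?size_rotr ?size_tuple // rotrK.
Qed.

(* |P_{n+1}(b)| = |N_{n+1}(b)| + (n+1) |N_n(b)|: a distinct tuple contains
   0 at most once, and for each of the n+1 positions the tuples with 0
   there are counted by the previous lemma. *)
Lemma card_dist_tuples_split n (b : F) :
  #|dist_tuples n.+1 b| =
  (#|dist_tuples_nz n.+1 b| + n.+1 * #|dist_tuples_nz n b|)%N.
Proof.
rewrite -(cardsID [set t : n.+1.-tuple F | 0 \in t] (dist_tuples n.+1 b)) addnC.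
congr (_ + _)%N.
  apply: eq_card => t; rewrite !inE.
  have [zero_t|zero_notin] /= := boolP (0 \in t).
    by apply/esym/negP => /and3P [_ /allP /(_ _ zero_t)]; rewrite inE eqxx.
  suff -> : all (fun x => x \in Fstar F) t by [].
  by apply/allP => y y_t; rewrite inE; apply: contraNneq zero_notin => <-.
rewrite card_setI_sum (eq_bigr (fun t : n.+1.-tuple F =>
  \sum_(i < n.+1) nat_of_bool (tnth t i == 0%R)))%N; last first.
  by move=> t; rewrite inE => /andP [uniq_t _]; rewrite sum_tnth_eq count_uniq_mem.
rewrite exchange_big (eq_bigr (fun _ => #|dist_tuples_nz n b|)); last first.
  by move=> i _; rewrite -card_setI_sum card_dist_tuples_zero_at.
by rewrite sum_nat_const card_ord.
Qed.

Lemma card_dist_tuples_nz0 (b : F) : #|dist_tuples_nz 0 b| = (b == 0 : nat).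
Proof.
have -> : dist_tuples_nz 0 b = [set t : 0.-tuple F | b == 0].
  by apply/setP => t; rewrite !inE tuple0 big_nil /= eq_sym.
by case: (b == 0); rewrite ?cards0 // cardsT card_tuple.
Qed.

End DistinctSums.

Lemma d_card (F : finFieldType) k :
  d F k = #|dist_tuples_nz F k 1|%:Z - #|dist_tuples_nz F k 0|%:Z.
Proof.
case: k => [|k]; last by rewrite /d !M_Fstar.
by rewrite !card_dist_tuples_nz0 oner_eq0 eqxx.
Qed.

Lemma d_rec (F : finFieldType) k : (0 < k)%N ->
  d F k = (#|dist_tuples F k 1|%:Z - #|dist_tuples F k 0|%:Z) - k%:Z * d F k.-1.
Proof.
case: k => [|k] // _; rewrite !d_card !card_dist_tuples_split !PoszD !PoszM.
rewrite mulrBr !opprB; ring.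
Qed.

Theorem lemma2p4 (F : finFieldType) (p : nat) (hp : p \in [pchar F]) :
  d F 1 = 1 /\
  (forall k : nat, (2 <= k)%N -> (k <= #|F| - 1)%N ->
     d F k = if (p %| k)%N then (#|F|%:Z - k%:Z) * d F k.-1
             else - (k%:Z) * d F k.-1).
Proof.
split.
  by rewrite d_rec // (@card_dist_tuples_const F 1 1 0) ?oner_neq0 // subrr.
case=> [|k] // _ _; rewrite d_rec // (dvdn_pcharf hp).
have [/eqP k1_eq0 | k1_neq0] := ifPn.
  by rewrite !card_dist_tuples_char // !PoszM -mulrBr -d_card mulrBl.
by rewrite (@card_dist_tuples_const F _ 1 0 k1_neq0) subrr sub0r mulNr.
Qed.
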